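(* For every $n\ge1$, $D(\alpha).Q_n(\alpha)=(\alpha^2n^2-n\alpha)Q_n(\alpha)$.
   Context: $F=\mathbb{Q}(\alpha)$, $\Lambda_F=F[p_1,p_2,\dots]$ with $p_n$ the power sums. For a partition $\lambda$ with $m_i$ parts equal to $i$, $l(\lambda)$ is its number of parts, $z_\lambda=\prod_i i^{m_i}m_i!$, $p_\lambda=\prod p_{\lambda_i}$. $Q_n(\alpha)=\sum_{\lambda\vdash n}\alpha^{-l(\lambda)}z_\lambda^{-1}p_\lambda$. The operator $$D(\alpha)=\sum_{i,j\ge1}(i+j)\alpha\,p_ip_j\frac{\partial}{\partial p_{i+j}}+\sum_{i,j\ge1}ij\alpha^2p_{i+j}\frac{\partial^2}{\partial p_i\partial p_j}+\alpha(\alpha-1)\sum_{k\ge1}k^2p_k\frac{\partial}{\partial p_k}.$$ *)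

From mathcomp Require Import all_boot all_order all_algebra.
From mathcomp Require Import fraction.
From mathcomp Require Import mpoly.
Set Implicit Arguments. Unset Strict Implicit. Unset Printing Implicit Defensive.
Import GRing.Theory.
Local Open Scope ring_scope.

Definition F : fieldType := {fraction {poly rat}}.
Definition alpha : F := tofrac ('X : {poly rat}).

(* Lambda_F restricted to the power sums p_1, ..., p_N :
   {mpoly F[N]}, where the variable 'X_k (k : 'I_N) stands for p_(k+1). *)

(* The operator D(alpha), on F[p_1,...,p_N].  Index conventions:
   'X_i = p_(i+1), 'X_j = p_(j+1), 'X_k = p_(k+1) with k = i+j+1,
   i.e. (i+1)+(j+1) = k+1. *)
Definition Dop (N : nat) (f : {mpoly F[N]}) : {mpoly F[N]} :=
  \sum_(i < N) \sum_(j < N) \sum_(k < N | (i + j + 1)%N == k)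
      ((k.+1)%:R * alpha) *: ('X_i * 'X_j * mderiv k f)
  + \sum_(i < N) \sum_(j < N) \sum_(k < N | (i + j + 1)%N == k)
      ((i.+1 * j.+1)%:R * alpha ^+ 2) *: ('X_k * mderiv i (mderiv j f))
  + (alpha * (alpha - 1)) *:
      \sum_(k < N) ((k.+1 ^ 2)%:R : F) *: ('X_k * mderiv k f).

(* A partition lambda of n with all parts <= N is encoded by its multiplicity
   vector m : 'I_N -> nat, m k = number of parts equal to k+1 (each m k <= n),
   subject to sum_k (k+1) m_k = n. *)
Definition is_partn (N n : nat) (m : {ffun 'I_N -> 'I_n.+1}) : bool :=
  (\sum_(k < N) k.+1 * m k)%N == n.

Definition part_len (N n : nat) (m : {ffun 'I_N -> 'I_n.+1}) : nat :=
  (\sum_(k < N) m k)%N.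

Definition zee (N n : nat) (m : {ffun 'I_N -> 'I_n.+1}) : nat :=
  (\prod_(k < N) (k.+1 ^ m k * (m k)`!))%N.

Definition p_part (N n : nat) (m : {ffun 'I_N -> 'I_n.+1}) : {mpoly F[N]} :=
  \prod_(k < N) 'X_k ^+ m k.

Definition Qn (N n : nat) : {mpoly F[N]} :=
  \sum_(m : {ffun 'I_N -> 'I_n.+1} | is_partn m)
     ((alpha ^+ part_len m)^-1 * ((zee m)%:R)^-1) *: p_part m.

From Pilot Require Import Defs.
From mathcomp Require Import all_boot all_order all_algebra.
From mathcomp Require Import fraction.
From mathcomp Require Import mpoly.
From mathcomp Require Import ring zify.
Import GRing.Theory.
Local Open Scope ring_scope.

Set Implicit Arguments. Unset Strict Implicit. Unset Printing Implicit Defensive.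

(* Write Q_n = sum_lambda c_lambda p_lambda with c_lambda = alpha^-l(lambda) / z_lambda.
   The term p_i p_j d/dp_(i+j) of D sends p_lambda to (i+j) m_(i+j)(lambda) p_mu, where
   mu is lambda with one part i+j split into parts i and j, and p_(i+j) d^2/dp_i dp_j
   sends p_mu back to i j m_j(mu) (m_i(mu) - [i = j]) p_lambda.  As l(mu) = l(lambda) + 1
   and z_mu (i+j) m_(i+j)(lambda) = z_lambda i j m_j(mu) (m_i(mu) - [i = j]), the
   bijection lambda <-> mu exchanges the two terms: on Q_n the splitting term of D
   multiplies c_lambda p_lambda by
     alpha^2 sum_(i,j) i j m_j (m_i - [i = j]) = alpha^2 (n^2 - sum_k k^2 m_k),
   and the joining term by alpha sum_k k (k - 1) m_k.  Together with the diagonal term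
   alpha (alpha - 1) sum_k k^2 m_k, every p_lambda gets the eigenvalue
   alpha^2 n^2 - alpha n. *)

Section Monomials.
Variables (R : comNzRingType) (N : nat).

Definition monX (v : 'I_N -> nat) : {mpoly R[N]} := \prod_(t < N) 'X_t ^+ v t.

Lemma monXE v : monX v = 'X_[[multinom v t | t < N]].
Proof. by rewrite mpolyXE_id; apply: eq_bigr => t _; rewrite mnmE. Qed.

Lemma eq_monX v w : v =1 w -> monX v = monX w.
Proof. by move=> e; apply: eq_bigr => t _; rewrite e. Qed.

Lemma mderiv_monX k v :
  mderiv k (monX v) = (v k)%:R *: monX (fun t => v t - (t == k))%N.
Proof.
rewrite !monXE mderivX mnmE; congr (_ *: 'X_[_]); apply/mnmP => t.
by rewrite mnmBE !mnmE eq_sym.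
Qed.

Lemma mulX_monX i v : 'X_i * monX v = monX (fun t => v t + (t == i))%N.
Proof.
rewrite !monXE -mpolyXD; congr 'X_[_]; apply/mnmP => t.
by rewrite mnmDE !mnmE eq_sym addnC.
Qed.

Lemma mulX_mderiv_monX k v : 'X_k * mderiv k (monX v) = (v k)%:R *: monX v.
Proof.
rewrite mderiv_monX -scalerAr mulX_monX.
have [->|vk_gt0] := posnP (v k); first by rewrite !scale0r.
congr (_ *: _); apply: eq_monX => t.
by case: eqP => [->|_]; rewrite ?subnK ?subn0 ?addn0.
Qed.

End Monomials.

Arguments monX {R N}.

Lemma sum_scale_exchange (R : nzRingType) (V : lmodType R) (I J : finType)
    (P : pred I) (Q : pred J) (c : J -> R) (f : I -> J -> R) (v : J -> V) :
  \sum_(x | P x) \sum_(y | Q y) (c y * f x y) *: v y =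
  \sum_(y | Q y) (c y * \sum_(x | P x) f x y) *: v y.
Proof.
rewrite exchange_big; apply: eq_bigr => y _.
by rewrite mulr_sumr scaler_suml.
Qed.

Lemma sum_triples_scale_exchange (R : nzRingType) (V : lmodType R) N (J : finType)
    (Q : pred J) (c : J -> R) (a : R) (f : 'I_N -> 'I_N -> 'I_N -> J -> nat) (v : J -> V) :
  \sum_(i < N) \sum_(j < N) \sum_(k < N | (i + j + 1)%N == k) \sum_(y | Q y)
      (c y * (a * (f i j k y)%:R)) *: v y =
  \sum_(y | Q y) (c y * (a * (\sum_(i < N) \sum_(j < N)
      \sum_(k < N | (i + j + 1)%N == k) f i j k y)%:R)) *: v y.
Proof.
under eq_bigr => i _ do under eq_bigr => j _ do rewrite sum_scale_exchange.
under eq_bigr => i _ do rewrite sum_scale_exchange.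
rewrite sum_scale_exchange; apply: eq_bigr => y _.
under eq_bigr => i _ do under eq_bigr => j _ do rewrite -mulr_sumr -natr_sum.
under eq_bigr => i _ do rewrite -mulr_sumr -natr_sum.
by rewrite -mulr_sumr -natr_sum.
Qed.

Lemma sum_mul_eq N (g : 'I_N -> nat) (x : 'I_N) :
  (\sum_(t < N) g t * (t == x))%N = g x.
Proof.
rewrite (bigD1 x) //= eqxx muln1 big1 ?addn0 //.
by move=> t /negbTE ->; rewrite muln0.
Qed.

Lemma mult_le_size N n (w : 'I_N -> nat) :
  (\sum_(t < N) t.+1 * w t)%N = n -> forall t, (w t <= n)%N.
Proof.
move=> <- t; rewrite (bigD1 t) //=; apply: leq_trans (leq_addr _ _).
exact: leq_pmull.
Qed.

Lemma sum_mul_shift N (g v w : 'I_N -> nat) (i j k : 'I_N) :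
  (forall t, w t + (t == k) = v t + (t == j) + (t == i))%N ->
  (\sum_(t < N) g t * w t + g k = \sum_(t < N) g t * v t + g j + g i)%N.
Proof.
move=> e; rewrite -{1}(sum_mul_eq g k) -big_split /=.
rewrite (eq_bigr (fun t => g t * v t + g t * (t == j) + g t * (t == i))%N).
  by rewrite !big_split /= !sum_mul_eq.
by move=> t _; rewrite -!mulnDr e.
Qed.

Lemma sum_parts_split N (v w : 'I_N -> nat) (i j k : 'I_N) :
  (i + j + 1)%N = k ->
  (forall t, w t + (t == k) = v t + (t == j) + (t == i))%N ->
  (\sum_(t < N) t.+1 * w t = \sum_(t < N) t.+1 * v t)%N.
Proof.
move=> hk /(sum_mul_shift (fun t => t.+1)) e.
by apply/eqP; rewrite -(eqn_add2r k.+1) e -hk; apply/eqP; lia.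
Qed.

Local Notation mvec N n := {ffun 'I_N -> 'I_n.+1}.

Definition zvec N (v : 'I_N -> nat) : nat :=
  (\prod_(t < N) (t.+1 ^ v t * (v t)`!))%N.

Lemma zvec_gt0 N (v : 'I_N -> nat) : (0 < zvec v)%N.
Proof. by apply: prodn_gt0 => t; rewrite muln_gt0 expn_gt0 fact_gt0. Qed.

Lemma zvec_incr N (v w : 'I_N -> nat) (s : 'I_N) :
  (forall t, w t = v t + (t == s))%N -> zvec w = (zvec v * (s.+1 * w s))%N.
Proof.
move=> e; rewrite /zvec (bigD1 s) //= [in RHS](bigD1 s) //=.
rewrite (eq_bigr (fun t : 'I_N => t.+1 ^ v t * (v t)`!)%N); last first.
  by move=> t /negbTE ts; rewrite e ts addn0.
by rewrite e eqxx addn1 expnS factS; ring.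
Qed.

Lemma alpha_neq0 : alpha != 0.
Proof. by rewrite /alpha tofrac_eq0 polyX_eq0. Qed.

Lemma pnatrF_neq0 m : (0 < m)%N -> (m%:R : F) != 0.
Proof.
move=> m_gt0; rewrite -tofrac1 -tofracMn tofrac_eq0 -polyC1 -polyCMn polyC_eq0.
by rewrite Num.Theory.pnatr_eq0 -lt0n.
Qed.

Lemma ratio_exchange (R : fieldType) (a A Z Z' K W : R) :
  a != 0 -> A != 0 -> Z != 0 -> Z' != 0 -> Z' * K = Z * W ->
  A^-1 * Z^-1 * (a * K) = (a * A)^-1 * Z'^-1 * (a ^+ 2 * W).
Proof.
move=> a0 A0 Z0 Z'0 e; have -> : W = Z^-1 * (Z' * K) by rewrite e mulKf.
by field; rewrite a0 A0 Z0 Z'0.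
Qed.

Definition coefQ N n (m : mvec N n) : F :=
  (alpha ^+ part_len m)^-1 * ((zee m)%:R)^-1.

Lemma p_partE N n (m : mvec N n) : Defs.p_part m = monX (fun t => nat_of_ord (m t)).
Proof. by []. Qed.

Lemma QnE N n : Qn N n = \sum_(m : mvec N n | is_partn m) coefQ m *: Defs.p_part m.
Proof. by []. Qed.

Section SplitJoin.
Variables (N n : nat) (i j k : 'I_N).
Hypothesis hk : (i + j + 1)%N = k.

(* Parts are shifted by one as in [Defs]: [splits m mu] says that mu arises from m by
   replacing a part k+1 by the parts i+1 and j+1. *)
Definition splits (m mu : mvec N n) :=
  forall t, (mu t + (t == k) = m t + (t == j) + (t == i))%N.

Definition splitv (m : mvec N n) (t : 'I_N) : nat :=
  (m t - (t == k) + (t == j) + (t == i))%N.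
Definition joinv (mu : mvec N n) (t : 'I_N) : nat :=
  (mu t - (t == j) - (t == i) + (t == k))%N.

Definition splitp (m : mvec N n) : mvec N n := [ffun t => inord (splitv m t)].
Definition joinp (mu : mvec N n) : mvec N n := [ffun t => inord (joinv mu t)].

(* [mu j * (mu i - (i == j))] counts the ordered choices of a part j+1 and another part i+1. *)
Definition join_wt (mu : mvec N n) : nat :=
  (i.+1 * j.+1 * (mu j * (mu i - (i == j))))%N.

Lemma split_neq : ((k == i) = false) * ((k == j) = false).
Proof. by split; apply/negbTE; rewrite -(inj_eq val_inj) /= -hk; apply/eqP; lia. Qed.

Section Splits.
Variables (m mu : mvec N n).
Hypothesis s : splits m mu.

Lemma splits_splitv t : splitv m t = mu t.
Proof.
move: (s t); rewrite /splitv; case: (eqVneq t k) => [->|_].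
  by rewrite !split_neq /=; lia.
by rewrite subn0 addn0.
Qed.

Lemma splits_joinv t : joinv mu t = m t.
Proof.
move: (s t); rewrite /joinv; case: (eqVneq t k) => [->|_].
  by rewrite !split_neq /=; lia.
by case: (t == j); case: (t == i); rewrite /= ?addn0 => ->; lia.
Qed.

Lemma splits_mult_gt0 : (0 < m k)%N.
Proof.
by move: (s k); rewrite eqxx !split_neq; lia.
Qed.

Lemma splits_join_wt_gt0 : (0 < join_wt mu)%N.
Proof.
move: (s i) (s j); rewrite !eqxx !(eq_sym _ k) !split_neq /join_wt !muln_gt0 /=.
by case: (eqVneq i j) => [<-|_] /=; lia.
Qed.

Lemma splits_partn : is_partn m = is_partn mu.
Proof. by rewrite /is_partn (sum_parts_split hk s). Qed.

Lemma splits_splitp : splitp m = mu.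
Proof. by apply/ffunP => t; rewrite ffunE splits_splitv inord_val. Qed.

Lemma splits_joinp : joinp mu = m.
Proof. by apply/ffunP => t; rewrite ffunE splits_joinv inord_val. Qed.

End Splits.

Lemma splitp_splits m : is_partn m -> (0 < m k)%N -> splits m (splitp m).
Proof.
move=> /eqP Pm mk.
have sv t : (splitv m t + (t == k) = m t + (t == j) + (t == i))%N.
  rewrite /splitv; case: (eqVneq t k) => [->|_]; last by rewrite subn0 addn0.
  by rewrite !split_neq /=; lia.
have wt : (\sum_(t < N) t.+1 * splitv m t)%N = n by rewrite (sum_parts_split hk sv).
move=> t; rewrite ffunE inordK; first exact: sv.
by rewrite ltnS (mult_le_size wt).
Qed.

Lemma joinp_splits mu : is_partn mu -> (0 < join_wt mu)%N -> splits (joinp mu) mu.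
Proof.
rewrite /join_wt !muln_gt0 /= => /eqP Pmu /andP[mj mi].
have jv t : (mu t + (t == k) = joinv mu t + (t == j) + (t == i))%N.
  rewrite /joinv; case: (eqVneq t k) => [->|_]; first by rewrite !split_neq /=; lia.
  rewrite addn0; move: mi; case: (eqVneq t j) => [->|_].
    by case: (eqVneq j i) => [<-|_] /=; lia.
  by case: (eqVneq t i) => [->|_]; case: (i == j) => /=; lia.
have wt : (\sum_(t < N) t.+1 * joinv mu t)%N = n by rewrite -(sum_parts_split hk jv).
move=> t; rewrite ffunE inordK; first exact: jv.
by rewrite ltnS (mult_le_size wt).
Qed.

Lemma part_len_splits m mu : splits m mu -> part_len mu = (part_len m).+1.
Proof.
move=> /(sum_mul_shift (fun=> 1%N)) e.
by rewrite -!big_distrr /= !mul1n !addn1 in e; case: e.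
Qed.

Lemma zee_splits m mu : splits m mu ->
  (zee mu * (k.+1 * m k) = zee m * join_wt mu)%N.
Proof.
move=> s; pose m1 t := (m t - (t == k))%N.
pose m2 t := (m1 t + (t == j))%N.
have z1 : zee m = (zvec m1 * (k.+1 * m k))%N.
  apply: (zvec_incr (w := fun t => nat_of_ord (m t))) => t; rewrite /m1.
  case: (eqVneq t k) => [->|_]; last by rewrite subn0 addn0.
  by have := splits_mult_gt0 s; lia.
have z2 : zvec m2 = (zvec m1 * (j.+1 * m2 j))%N by apply: zvec_incr.
have z3 : zee mu = (zvec m2 * (i.+1 * mu i))%N.
  by apply: (zvec_incr (w := fun t => nat_of_ord (mu t))) => t; rewrite -(splits_splitv s).
have ex : (m2 j * mu i = mu j * (mu i - (i == j)))%N.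
  rewrite -(splits_splitv s i) -(splits_splitv s j) /splitv /m2 /m1.
  rewrite !(eq_sym _ k) !split_neq !eqxx !subn0.
  by case: (eqVneq i j) => [<-|_] /=; nia.
by rewrite z3 z2 z1 /join_wt -ex; ring.
Qed.

Lemma coefQ_splits m mu : splits m mu ->
  coefQ m * (alpha * (k.+1 * m k)%:R) = coefQ mu * (alpha ^+ 2 * (join_wt mu)%:R).
Proof.
move=> s; rewrite /coefQ (part_len_splits s) exprS.
apply: ratio_exchange; rewrite ?pnatrF_neq0 ?zvec_gt0 ?expf_neq0 ?alpha_neq0 //.
by rewrite -!natrM (zee_splits s).
Qed.

Lemma sum_splits (V : nmodType) (f : mvec N n -> mvec N n -> V) :
  \sum_(m | is_partn m && (0 < m k)%N) f m (splitp m) =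
  \sum_(mu | is_partn mu && (0 < join_wt mu)%N) f (joinp mu) mu.
Proof.
rewrite (reindex_onto joinp splitp) /=; last first.
  by move=> m /andP[Pm mk]; rewrite (splits_joinp (splitp_splits Pm mk)).
apply: eq_big => [mu|mu /andP[_ /eqP ->] //].
apply/idP/idP => [/andP[/andP[Pm mk] /eqP e]|/andP[Pmu hmu]].
  have s := splitp_splits Pm mk; rewrite e in s.
  by rewrite -(splits_partn s) Pm (splits_join_wt_gt0 s).
have s := joinp_splits Pmu hmu.
by rewrite (splits_partn s) Pmu (splits_mult_gt0 s) (splits_splitp s) eqxx.
Qed.

Lemma split_p_part m :
  ((k.+1)%:R * alpha) *: ('X_i * 'X_j * mderiv k (Defs.p_part m)) =
  (alpha * (k.+1 * m k)%:R) *: monX (splitv m).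
Proof.
rewrite p_partE mderiv_monX -scalerAr -mulrA !mulX_monX scalerA.
by rewrite natrM mulrA [_ * alpha]mulrC.
Qed.

Lemma join_p_part mu :
  ((i.+1 * j.+1)%:R * alpha ^+ 2) *: ('X_k * mderiv i (mderiv j (Defs.p_part mu))) =
  (alpha ^+ 2 * (join_wt mu)%:R) *: monX (joinv mu).
Proof.
rewrite p_partE mderiv_monX mderivZ mderiv_monX -!scalerAr mulX_monX !scalerA.
by rewrite -!natrM [_ * alpha ^+ 2]mulrC -mulrA -natrM.
Qed.

Lemma split_term_Qn :
  ((k.+1)%:R * alpha) *: ('X_i * 'X_j * mderiv k (Qn N n)) =
  \sum_(m : mvec N n | is_partn m)
    (coefQ m * (alpha ^+ 2 * (join_wt m)%:R)) *: Defs.p_part m.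
Proof.
transitivity (\sum_(m | is_partn m && (0 < m k)%N)
    (coefQ m * (alpha * (k.+1 * m k)%:R)) *: Defs.p_part (splitp m)).
  rewrite QnE raddf_sum mulr_sumr scaler_sumr big_mkcondr; apply: eq_bigr => m Pm.
  rewrite /= mderivZ -scalerAr scalerA [_ * coefQ m]mulrC -[in LHS]scalerA.
  rewrite split_p_part scalerA.
  case: (posnP (m k)) => [->|mk]; first by rewrite muln0 !mulr0 scale0r.
  congr (_ *: _); rewrite p_partE; apply: eq_monX.
  exact: splits_splitv (splitp_splits Pm mk).
rewrite (sum_splits (fun m mu =>
  (coefQ m * (alpha * (k.+1 * m k)%:R)) *: Defs.p_part mu)).
rewrite big_mkcondr; apply: eq_bigr => mu Pmu.
case: (posnP (join_wt mu)) => [->|hmu]; first by rewrite !mulr0 scale0r.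
by rewrite (coefQ_splits (joinp_splits Pmu hmu)).
Qed.

Lemma join_term_Qn :
  ((i.+1 * j.+1)%:R * alpha ^+ 2) *: ('X_k * mderiv i (mderiv j (Qn N n))) =
  \sum_(m : mvec N n | is_partn m)
    (coefQ m * (alpha * (k.+1 * m k)%:R)) *: Defs.p_part m.
Proof.
transitivity (\sum_(mu | is_partn mu && (0 < join_wt mu)%N)
    (coefQ mu * (alpha ^+ 2 * (join_wt mu)%:R)) *: Defs.p_part (joinp mu)).
  rewrite QnE [mderiv j _]raddf_sum [mderiv i _]raddf_sum mulr_sumr scaler_sumr.
  rewrite big_mkcondr; apply: eq_bigr => mu Pmu.
  rewrite /= !mderivZ -scalerAr scalerA [_ * coefQ mu]mulrC -[in LHS]scalerA.
  rewrite join_p_part scalerA.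
  case: (posnP (join_wt mu)) => [->|hmu]; first by rewrite !mulr0 scale0r.
  congr (_ *: _); rewrite p_partE; apply: eq_monX.
  exact: splits_joinv (joinp_splits Pmu hmu).
rewrite -(sum_splits (fun m mu =>
  (coefQ mu * (alpha ^+ 2 * (join_wt mu)%:R)) *: Defs.p_part m)).
rewrite big_mkcondr; apply: eq_bigr => m Pm.
case: (posnP (m k)) => [->|mk]; first by rewrite muln0 !mulr0 scale0r.
by rewrite -(coefQ_splits (splitp_splits Pm mk)).
Qed.

End SplitJoin.

Lemma euler_term_Qn N n (k : 'I_N) :
  ((k.+1 ^ 2)%:R : F) *: ('X_k * mderiv k (Qn N n)) =
  \sum_(m : mvec N n | is_partn m) (coefQ m * (k.+1 ^ 2 * m k)%:R) *: Defs.p_part m.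
Proof.
rewrite QnE raddf_sum mulr_sumr scaler_sumr; apply: eq_bigr => m _.
rewrite /= mderivZ -scalerAr scalerA [_ * coefQ m]mulrC -[in LHS]scalerA.
by rewrite p_partE mulX_mderiv_monX !scalerA natrM mulrA.
Qed.

Definition join_total N n (m : mvec N n) : nat :=
  (\sum_(i < N) \sum_(j < N) \sum_(k < N | (i + j + 1)%N == k) join_wt i j m)%N.
Definition split_total N n (m : mvec N n) : nat :=
  (\sum_(i < N) \sum_(j < N) \sum_(k < N | (i + j + 1)%N == k) k.+1 * m k)%N.
Definition euler_total N n (m : mvec N n) : nat :=
  (\sum_(k < N) k.+1 ^ 2 * m k)%N.

Lemma split_op_Qn N n :
  \sum_(i < N) \sum_(j < N) \sum_(k < N | (i + j + 1)%N == k)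
      ((k.+1)%:R * alpha) *: ('X_i * 'X_j * mderiv k (Qn N n)) =
  \sum_(m : mvec N n | is_partn m)
      (coefQ m * (alpha ^+ 2 * (join_total m)%:R)) *: Defs.p_part m.
Proof.
under eq_bigr => i _ do under eq_bigr => j _ do
  under eq_bigr => k /eqP hk do rewrite (split_term_Qn n hk).
exact: sum_triples_scale_exchange.
Qed.

Lemma join_op_Qn N n :
  \sum_(i < N) \sum_(j < N) \sum_(k < N | (i + j + 1)%N == k)
      ((i.+1 * j.+1)%:R * alpha ^+ 2) *: ('X_k * mderiv i (mderiv j (Qn N n))) =
  \sum_(m : mvec N n | is_partn m)
      (coefQ m * (alpha * (split_total m)%:R)) *: Defs.p_part m.
Proof.
under eq_bigr => i _ do under eq_bigr => j _ do
  under eq_bigr => k /eqP hk do rewrite (join_term_Qn n hk).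
exact: sum_triples_scale_exchange.
Qed.

Lemma euler_op_Qn N n :
  (alpha * (alpha - 1)) *:
    \sum_(k < N) ((k.+1 ^ 2)%:R : F) *: ('X_k * mderiv k (Qn N n)) =
  \sum_(m : mvec N n | is_partn m)
      (coefQ m * (alpha * (alpha - 1) * (euler_total m)%:R)) *: Defs.p_part m.
Proof.
rewrite scaler_sumr.
under eq_bigr => k _ do rewrite euler_term_Qn scaler_sumr.
under eq_bigr => k _ do under eq_bigr => m _ do rewrite scalerA mulrCA.
rewrite sum_scale_exchange; apply: eq_bigr => m _.
by rewrite -mulr_sumr -natr_sum.
Qed.

Lemma sum_ord_eq_const N (a x : nat) :
  (\sum_(k < N | a == k) x = if a < N then x else 0)%N.
Proof.
case: ifP => ha; last by apply: big1 => k /eqP ak; move: ha; rewrite ak ltn_ord.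
by rewrite (big_pred1 (Ordinal ha)).
Qed.

Lemma join_wt_eq0 N n (m : mvec N n) (i j : 'I_N) :
  is_partn m -> (n <= N)%N -> (N <= i + j + 1)%N -> join_wt i j m = 0%N.
Proof.
move=> /eqP wt nN ijN; rewrite /join_wt.
case: (eqVneq i j) ijN => [<-|nij] ijN /=.
  have : (i.+1 * m i <= n)%N by rewrite -[X in (_ <= X)%N]wt (bigD1 i) //= leq_addr.
  by case: (nat_of_ord (m i)) => [|[|mi]] /=; rewrite ?muln0 //; nia.
have : (i.+1 * m i + j.+1 * m j <= n)%N.
  by rewrite -[X in (_ <= X)%N]wt (bigD1 i) //= (bigD1 j) /= 1?eq_sym // addnA leq_addr.
rewrite subn0; case: (nat_of_ord (m i)) => [|mi]; rewrite ?muln0 //.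
by case: (nat_of_ord (m j)) => [|mj]; rewrite ?muln0 ?mul0n //; nia.
Qed.

Lemma join_wt_diag N n (m : mvec N n) (i j : 'I_N) :
  (join_wt i j m + i.+1 ^ 2 * m i * (j == i) = i.+1 * m i * (j.+1 * m j))%N.
Proof.
rewrite /join_wt; case: (eqVneq j i) => [->|_] /=; last by rewrite subn0 muln0 addn0; ring.
by case: (nat_of_ord (m i)) => [|mi]; rewrite ?muln0 // subn1 /=; ring.
Qed.

Lemma join_total_partn N n (m : mvec N n) :
  is_partn m -> (n <= N)%N -> (join_total m + euler_total m = n ^ 2)%N.
Proof.
move=> Pm nN; have /eqP wt := Pm.
have -> : join_total m = (\sum_(i < N) \sum_(j < N) join_wt i j m)%N.
  apply: eq_bigr => i _; apply: eq_bigr => j _.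
  by rewrite sum_ord_eq_const; case: ltnP => // ijN; rewrite join_wt_eq0.
have -> : euler_total m = (\sum_(i < N) \sum_(j < N) i.+1 ^ 2 * m i * (j == i))%N.
  by apply: eq_bigr => i _; rewrite sum_mul_eq.
rewrite -big_split /=; under eq_bigr => i _ do rewrite -big_split /=.
under eq_bigr => i _ do under eq_bigr => j _ do rewrite join_wt_diag.
under eq_bigr => i _ do rewrite -big_distrr.
by rewrite -big_distrl /= wt mulnn.
Qed.

Lemma card_split_pairs N (k : 'I_N) :
  (\sum_(i < N) \sum_(j < N) ((i + j + 1)%N == k) = k)%N.
Proof.
have row (i : 'I_N) : (\sum_(j < N) ((i + j + 1)%N == k) = (i < k))%N.
  case: ltnP => ik; last by apply: big1 => j _; case: eqP => //; lia.
  have jN : (k - i.+1 < N)%N by have := ltn_ord k; lia.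
  rewrite (bigD1 (Ordinal jN)) //= big1 ?addn0; first by case: eqP => //; lia.
  by move=> j /eqP nj; case: eqP => // e; case: nj; apply: val_inj => /=; lia.
rewrite (eq_bigr _ (fun i _ => row i)) -(big_mkord xpredT (fun i => (i < k) : nat)).
rewrite (big_cat_nat _ (n := k)) //=; last exact: ltnW.
rewrite (eq_big_nat _ _ (F2 := fun=> 1%N)); last by move=> i /andP[_ ->].
rewrite [X in (_ + X)%N](eq_big_nat _ _ (F2 := fun=> 0%N)); last first.
  by move=> i /andP[ki _]; rewrite ltnNge ki.
by rewrite !sum_nat_const_nat muln1 muln0 addn0 subn0.
Qed.

Lemma split_total_partn N n (m : mvec N n) :
  is_partn m -> (split_total m + n = euler_total m)%N.
Proof.
move=> /eqP wt.
have -> : split_total m = (\sum_(k < N) k * (k.+1 * m k))%N.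
  rewrite /split_total.
  under eq_bigr => i _ do under eq_bigr => j _ do rewrite big_mkcond.
  under eq_bigr => i _ do rewrite exchange_big.
  rewrite exchange_big; apply: eq_bigr => k _ /=.
  have -> : (k * (k.+1 * m k) =
             (\sum_(i < N) \sum_(j < N) ((i + j + 1)%N == k)) * (k.+1 * m k))%N.
    by rewrite card_split_pairs.
  rewrite big_distrl; apply: eq_bigr => i _; rewrite big_distrl; apply: eq_bigr => j _.
  by rewrite /=; case: eqP; rewrite ?mul1n ?mul0n.
rewrite -[X in (_ + X)%N]wt -big_split; apply: eq_bigr => k _ /=; nia.
Qed.

Lemma eigenvalue_combination (R : comNzRingType) (a : R) (J S E n : nat) :
  (J + E = n ^ 2)%N -> (S + n = E)%N ->
  a ^+ 2 * J%:R + a * S%:R + a * (a - 1) * E%:R = a ^+ 2 * (n ^ 2)%:R - n%:R * a.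
Proof. by move=> <- <-; rewrite !natrD; ring. Qed.

Unset Implicit Arguments.

Theorem lemma3p5 (n N : nat) (hn : (1 <= n)%N) (hN : (n <= N)%N) :
  Dop (Qn N n) = (alpha ^+ 2 * (n ^ 2)%:R - n%:R * alpha) *: Qn N n.
Proof.
rewrite /Dop split_op_Qn join_op_Qn euler_op_Qn -!big_split QnE scaler_sumr /=.
apply: eq_bigr => m Pm; rewrite -!scalerDl -!mulrDr scalerA [_ * coefQ m]mulrC.
by rewrite (eigenvalue_combination _ (join_total_partn Pm hN) (split_total_partn Pm)).
Qed.
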